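(* For all $a,b>0$, $A(a,b)\le\lambda_s(a,b)\le S(a,b)$ whenever $2\le s\le 5$. These bounds are best possible: the inequality $A(a,b)\le\lambda_s(a,b)$ holds for all $a,b>0$ if and only if $s\ge 2$, and the inequality $\lambda_s(a,b)\le S(a,b)$ holds for all $a,b>0$ if and only if $s\le 5$.
   Context: For $a,b>0$ with $a\neq b$ define $$\lambda_s(a,b)=\begin{cases}\dfrac{s-1}{s+1}\cdot\dfrac{a^{s+1}+b^{s+1}-2\left(\frac{a+b}{2}\right)^{s+1}}{a^s+b^s-2\left(\frac{a+b}{2}\right)^s}, & s\in\mathbb{R}\setminus\{-1,0,1\},\\[3mm] \dfrac{2\log\frac{a+b}{2}-\log a-\log b}{\frac{1}{2a}+\frac{1}{2b}-\frac{2}{a+b}}, & s=-1,\\[3mm] \dfrac{a\log a+b\log b-(a+b)\log\frac{a+b}{2}}{2\log\frac{a+b}{2}-\log a-\log b}, & s=0,\\[3mm] \dfrac{(b-a)^2}{4\left(a\log a+b\log b-(a+b)\log\frac{a+b}{2}\right)}, & s=1,\end{cases}$$ and $\lambda_s(a,a)=a$. The arithmetic mean is $A(a,b)=(a+b)/2$ and the Gini mean is $S(a,b)=a^{a/(a+b)}\,b^{b/(a+b)}$. *)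

From Stdlib Require Import Reals Lra.
Open Scope R_scope.

Definition AM (a b : R) : R := (a + b) / 2.

Definition Gini (a b : R) : R :=
  Rpower a (a / (a + b)) * Rpower b (b / (a + b)).

Definition lambda (s a b : R) : R :=
  if Req_EM_T a b then a
  else if Req_EM_T s (-1) then
    (2 * ln ((a + b) / 2) - ln a - ln b) /
    (1 / (2 * a) + 1 / (2 * b) - 2 / (a + b))
  else if Req_EM_T s 0 then
    (a * ln a + b * ln b - (a + b) * ln ((a + b) / 2)) /
    (2 * ln ((a + b) / 2) - ln a - ln b)
  else if Req_EM_T s 1 then
    (b - a) ^ 2 / (4 * (a * ln a + b * ln b - (a + b) * ln ((a + b) / 2)))
  else
    (s - 1) / (s + 1) *
    ((Rpower a (s + 1) + Rpower b (s + 1) - 2 * Rpower ((a + b) / 2) (s + 1)) /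
     (Rpower a s + Rpower b s - 2 * Rpower ((a + b) / 2) s)).

(* Integrating x^p against the tent
   kernel K(x) = (b - a)/2 - |x - (a+b)/2| on [a, b] gives, by Peano's formula
   for the second difference, the moments
     M_p(a, b) = (a^(p+2) + b^(p+2) - 2 ((a+b)/2)^(p+2)) / ((p+1)(p+2))
   (with logarithmic forms at p = -1, -2), and every branch of the definition
   of lambda_s is the ratio M_{s-1} / M_{s-2}.  Since K >= 0, integrating
   the nonnegative function x^(s-2) (x - c) (x^(r-s) - c^(r-s)), c = lambda_s,
   shows that s -> lambda_s(a, b) is strictly increasing for a <> b.  Hence the inequalities reduce to the endpoints:
   lambda_2 = A by direct computation, and lambda_5 <= S is an inequality in
   one variable t = (b - a)/(b + a), proved by comparing derivatives.
   Sharpness: for s < 2 monotonicity gives lambda_s < A; for s > 5 second-order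
   estimates of the moments on [1 - t, 1 + t] show lambda_s > S for small t. *)

From Stdlib Require Import Reals Lra.
From Coquelicot Require Import Coquelicot.
Open Scope R_scope.

Lemma Rpower_pos x p : 0 < Rpower x p.
Proof. apply exp_pos. Qed.

Lemma Rpower_1_l p : Rpower 1 p = 1.
Proof. unfold Rpower. rewrite ln_1, Rmult_0_r. apply exp_0. Qed.

Lemma is_derive_Rpower p x : 0 < x ->
  is_derive (fun y => Rpower y p) x (p * Rpower x (p - 1)).
Proof. intros Hx. apply is_derive_Reals, derivable_pt_lim_power, Hx. Qed.

Ltac solve_continuity :=
  apply (@ex_derive_continuous R_AbsRing R_NormedModule);
  unfold Rpower; auto_derive; repeat split; lra.

Lemma exp_le_compat x y : x <= y -> exp x <= exp y.
Proof. intros [H|H]; [left; apply exp_increasing, H|right; rewrite H; reflexivity]. Qed.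

Lemma nondecreasing_of_derive (f df : R -> R) x0 x1 : x0 <= x1 ->
  (forall x, x0 <= x <= x1 -> is_derive f x (df x)) ->
  (forall x, x0 <= x <= x1 -> 0 <= df x) -> f x0 <= f x1.
Proof.
intros [Hlt|Heq] Hd Hpos; [|subst; lra].
destruct (MVT_cor2 f df x0 x1 Hlt) as [c [Ec Hc]].
{ intros c Hc. apply is_derive_Reals, Hd, Hc. }
assert (0 <= df c) by (apply Hpos; lra). nra.
Qed.

Lemma is_RInt_affine_weight (g g1 g2 : R -> R) alpha beta u v : u <= v ->
  (forall x, u <= x <= v -> is_derive g x (g1 x)) ->
  (forall x, u <= x <= v -> is_derive g1 x (g2 x)) ->
  (forall x, u <= x <= v -> continuous g2 x) ->
  is_RInt (fun x => (alpha * x + beta) * g2 x) u v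
    (((alpha * v + beta) * g1 v - alpha * g v) - ((alpha * u + beta) * g1 u - alpha * g u)).
Proof.
intros Huv Hg Hg1 Hc.
apply (@is_RInt_derive R_CompleteNormedModule
         (fun x => (alpha * x + beta) * g1 x - alpha * g x));
  intros x Hx; rewrite Rmin_left, Rmax_right in Hx by lra.
- replace ((alpha * x + beta) * g2 x)
    with ((alpha * g1 x + (alpha * x + beta) * g2 x) - alpha * g1 x) by ring.
  apply (is_derive_minus (fun y => (alpha * y + beta) * g1 y) (fun y => alpha * g y)).
  + apply (is_derive_mult (fun y => alpha * y + beta) g1).
    * auto_derive; auto; ring.
    * apply Hg1; lra.
    * intros; apply Rmult_comm.
  + apply (is_derive_scal g). apply Hg; lra.
- apply (continuous_mult (fun y => alpha * y + beta) g2); [solve_continuity|apply Hc; lra].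
Qed.

(* The tent integral of f over [a, b]: f integrated against the Peano kernel
   of the second difference, which rises linearly from a to the midpoint and
   falls back linearly to b. *)
Definition tent a b (f : R -> R) :=
  RInt (fun x => (x - a) * f x) a ((a + b) / 2) +
  RInt (fun x => (b - x) * f x) ((a + b) / 2) b.

Lemma tent_second_difference a b (f g g1 : R -> R) : a < b ->
  (forall x, a <= x <= b -> is_derive g x (g1 x)) ->
  (forall x, a <= x <= b -> is_derive g1 x (f x)) ->
  (forall x, a <= x <= b -> continuous f x) ->
  tent a b f = g a + g b - 2 * g ((a + b) / 2).
Proof.
intros Hab Hg Hg1 Hc. unfold tent.
set (m := (a + b) / 2).
assert (Hm : a < m < b) by (unfold m; lra).
rewrite (RInt_ext _ (fun x => (1 * x + - a) * f x)) by (intros x _; simpl; ring).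
rewrite (RInt_ext (fun x => (b - x) * f x) (fun x => (-1 * x + b) * f x)) by (intros x _; simpl; ring).
rewrite (is_RInt_unique _ _ _ _ (is_RInt_affine_weight g g1 f 1 (- a) a m ltac:(lra)
  ltac:(intros; apply Hg; lra) ltac:(intros; apply Hg1; lra) ltac:(intros; apply Hc; lra))).
rewrite (is_RInt_unique _ _ _ _ (is_RInt_affine_weight g g1 f (-1) b m b ltac:(lra)
  ltac:(intros; apply Hg; lra) ltac:(intros; apply Hg1; lra) ltac:(intros; apply Hc; lra))).
unfold m; field.
Qed.

Lemma RInt_lin (f g : R -> R) u v al be : ex_RInt f u v -> ex_RInt g u v ->
  RInt (fun x => al * f x + be * g x) u v = al * RInt f u v + be * RInt g u v.
Proof.
intros Hf Hg.
rewrite (RInt_plus (V:=R_CompleteNormedModule) (fun x => al * f x) (fun x => be * g x)).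
- exact (f_equal2 Rplus (RInt_scal (V:=R_CompleteNormedModule) f u v al Hf)
                        (RInt_scal (V:=R_CompleteNormedModule) g u v be Hg)).
- apply (ex_RInt_scal (V:=R_NormedModule) f u v al Hf).
- apply (ex_RInt_scal (V:=R_NormedModule) g u v be Hg).
Qed.

Section TentIntegral.
Variables a b : R.
Hypothesis Hab : a < b.

Let m := (a + b) / 2.
Let Hm : a < m < b. Proof. unfold m; lra. Qed.

Lemma tent_integrable (f : R -> R) : (forall x, a <= x <= b -> continuous f x) ->
  ex_RInt (fun x => (x - a) * f x) a m /\ ex_RInt (fun x => (b - x) * f x) m b.
Proof.
intros Hc. split; apply (ex_RInt_continuous (V:=R_CompleteNormedModule));
  intros z Hz; rewrite Rmin_left, Rmax_right in Hz by lra.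
- apply (continuous_mult (fun y => y - a) f); [solve_continuity|apply Hc; lra].
- apply (continuous_mult (fun y => b - y) f); [solve_continuity|apply Hc; lra].
Qed.

Lemma tent_ext (f g : R -> R) : (forall x, a <= x <= b -> f x = g x) ->
  tent a b f = tent a b g.
Proof.
intros E. unfold tent; fold m.
f_equal; apply RInt_ext; intros x Hx; rewrite Rmin_left, Rmax_right in Hx by lra;
  rewrite E by lra; reflexivity.
Qed.


Lemma tent_lin (f g : R -> R) al be :
  (forall x, a <= x <= b -> continuous f x) ->
  (forall x, a <= x <= b -> continuous g x) ->
  tent a b (fun x => al * f x + be * g x) = al * tent a b f + be * tent a b g.
Proof.
intros Hf Hg.
destruct (tent_integrable f Hf) as [F1 F2]. destruct (tent_integrable g Hg) as [G1 G2].
unfold tent; fold m.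
rewrite (RInt_ext (fun x => (x - a) * (al * f x + be * g x))
                  (fun x => al * ((x - a) * f x) + be * ((x - a) * g x))) by (intros x _; simpl; ring).
rewrite (RInt_ext (fun x => (b - x) * (al * f x + be * g x))
                  (fun x => al * ((b - x) * f x) + be * ((b - x) * g x))) by (intros x _; simpl; ring).
rewrite !RInt_lin by auto. ring.
Qed.

Lemma tent_ge0 (f : R -> R) : (forall x, a <= x <= b -> continuous f x) ->
  (forall x, a <= x <= b -> 0 <= f x) -> 0 <= tent a b f.
Proof.
intros Hc Hp. destruct (tent_integrable f Hc) as [F1 F2]. unfold tent; fold m.
apply Rplus_le_le_0_compat; apply RInt_ge_0; auto; try lra;
  intros x Hx; apply Rmult_le_pos; try lra; apply Hp; lra.
Qed.

Lemma tent_gt0 (f : R -> R) c : (forall x, a <= x <= b -> continuous f x) ->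
  (forall x, a <= x <= b -> 0 <= f x) ->
  (forall x, a <= x <= b -> x <> c -> 0 < f x) -> 0 < tent a b f.
Proof.
intros Hc Hp Hs. destruct (tent_integrable f Hc) as [F1 F2]. unfold tent; fold m.
assert (L0 : 0 <= RInt (fun x => (x - a) * f x) a m)
  by (apply RInt_ge_0; auto; try lra; intros x Hx; apply Rmult_le_pos; try lra; apply Hp; lra).
assert (R0 : 0 <= RInt (fun x => (b - x) * f x) m b)
  by (apply RInt_ge_0; auto; try lra; intros x Hx; apply Rmult_le_pos; try lra; apply Hp; lra).
destruct (Rle_or_lt m c) as [Hmc|Hcm].
- enough (0 < RInt (fun x => (x - a) * f x) a m) by lra.
  apply RInt_gt_0; try lra.
  + intros x Hx. apply Rmult_lt_0_compat; [lra|apply Hs; lra].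
  + intros x Hx. apply (continuous_mult (fun y => y - a) f); [solve_continuity|apply Hc; lra].
- enough (0 < RInt (fun x => (b - x) * f x) m b) by lra.
  apply RInt_gt_0; try lra.
  + intros x Hx. apply Rmult_lt_0_compat; [lra|apply Hs; lra].
  + intros x Hx. apply (continuous_mult (fun y => b - y) f); [solve_continuity|apply Hc; lra].
Qed.

End TentIntegral.

Lemma is_derive_Rpower_antideriv p x : 0 < x -> p + 1 <> 0 ->
  is_derive (fun y => Rpower y (p + 1) / (p + 1)) x (Rpower x p).
Proof.
intros Hx Hp.
apply is_derive_ext with (f := fun y => / (p + 1) * Rpower y (p + 1)).
{ intros; unfold Rdiv; apply Rmult_comm. }
replace (Rpower x p) with (/ (p + 1) * ((p + 1) * Rpower x (p + 1 - 1)))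
  by (replace (p + 1 - 1) with p by ring; field; exact Hp).
apply (is_derive_scal (fun y => Rpower y (p + 1))), is_derive_Rpower, Hx.
Qed.

Definition moment a b p := tent a b (fun x => Rpower x p).

Section Moments.
Variables a b : R.
Hypothesis Hab : 0 < a < b.

Lemma moment_pos p : 0 < moment a b p.
Proof.
apply (tent_gt0 a b ltac:(lra) _ a).
- intros x Hx; solve_continuity.
- intros; left; apply Rpower_pos.
- intros; apply Rpower_pos.
Qed.

Lemma moment_generic p : p + 1 <> 0 -> p + 2 <> 0 ->
  moment a b p =
  (Rpower a (p + 2) + Rpower b (p + 2) - 2 * Rpower ((a + b) / 2) (p + 2)) / ((p + 1) * (p + 2)).
Proof.
intros H1 H2. unfold moment.
rewrite (tent_second_difference a b _ (fun x => / (p + 1) * (Rpower x (p + 2) / (p + 2)))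
           (fun x => Rpower x (p + 1) / (p + 1))); [field; auto|lra| | |].
- intros x Hx.
  replace (Rpower x (p + 1) / (p + 1)) with (/ (p + 1) * Rpower x (p + 1)) by (field; auto).
  apply (is_derive_scal (fun y => Rpower y (p + 2) / (p + 2))).
  replace (p + 2) with ((p + 1) + 1) by ring. apply is_derive_Rpower_antideriv; lra.
- intros x Hx. apply is_derive_Rpower_antideriv; lra.
- intros x Hx; solve_continuity.
Qed.

Lemma moment_m1 : moment a b (-1) = a * ln a + b * ln b - (a + b) * ln ((a + b) / 2).
Proof.
unfold moment.
rewrite (tent_second_difference a b _ (fun x => x * ln x - x) ln); [field|lra| | |].
- intros x Hx. auto_derive; [lra|field; lra].
- intros x Hx. replace (-1) with (- (1)) by ring.
  rewrite Rpower_Ropp, Rpower_1 by lra. auto_derive; [lra|field; lra].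
- intros x Hx; solve_continuity.
Qed.

Lemma moment_m2 : moment a b (-2) = 2 * ln ((a + b) / 2) - ln a - ln b.
Proof.
unfold moment.
rewrite (tent_second_difference a b _ (fun x => - ln x) (fun x => - / x)); [field|lra| | |].
- intros x Hx. auto_derive; [lra|field; lra].
- intros x Hx. replace (-2) with (- INR 2) by (simpl; ring).
  rewrite Rpower_Ropp, Rpower_pow by lra. auto_derive; [lra|simpl; field; lra].
- intros x Hx; solve_continuity.
Qed.

End Moments.

Lemma Rpower_2 x : 0 < x -> Rpower x 2 = x * x.
Proof. intros Hx. replace 2 with (INR 2) by (simpl; ring). rewrite Rpower_pow by exact Hx. simpl; ring. Qed.

(* Every branch of the definition of lambda_s is the ratio M_{s-1} / M_{s-2}
   of two consecutive moments; the special values s = -1, 0, 1 are exactly the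
   exponents where a logarithmic moment appears. *)
Lemma lambda_moment_ratio s a b : 0 < a < b ->
  lambda s a b = moment a b (s - 1) / moment a b (s - 2).
Proof.
intros Hab.
pose proof (moment_pos a b Hab (s - 2)) as Hpos.
unfold lambda.
destruct (Req_EM_T a b) as [E|_]; [lra|].
destruct (Req_EM_T s (-1)) as [->|N1].
{ replace (-1 - 1) with (-2) by ring. replace (-1 - 2) with (-3) in * by ring.
  rewrite moment_m2 by exact Hab. rewrite moment_generic in * by (auto; lra).
  replace (-3 + 2) with (- (1)) in * by ring. rewrite !Rpower_Ropp, !Rpower_1 in * by lra.
  f_equal. field. lra. }
destruct (Req_EM_T s 0) as [->|N0].
{ replace (0 - 1) with (-1) by ring. replace (0 - 2) with (-2) by ring.
  rewrite moment_m2, moment_m1 by exact Hab. reflexivity. }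
destruct (Req_EM_T s 1) as [->|N1'].
{ replace (1 - 1) with 0 by ring. replace (1 - 2) with (-1) in * by ring.
  rewrite moment_m1 in * by exact Hab.
  rewrite moment_generic by (auto; lra). replace (0 + 2) with 2 by ring.
  rewrite !Rpower_2 by lra. field. lra. }
rewrite !moment_generic in * by (auto; lra).
replace (s - 1 + 2) with (s + 1) by ring. replace (s - 2 + 2) with s in * by ring.
replace (s - 1 + 1) with s by ring. replace (s - 2 + 1) with (s - 1) in * by ring.
assert (Rpower a s + Rpower b s - 2 * Rpower ((a + b) / 2) s <> 0).
{ intro E. rewrite E in Hpos. unfold Rdiv in Hpos. rewrite Rmult_0_l in Hpos. lra. }
field. repeat split; lra.
Qed.

Lemma Rpower_sub_mul_pos x c e : 0 < x -> 0 < c -> 0 < e -> x <> c ->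
  0 < (x - c) * (Rpower x e - Rpower c e).
Proof.
intros Hx Hc He Hxc. destruct (Rlt_or_le x c).
- assert (Rpower x e < Rpower c e) by (apply Rlt_Rpower_l; lra). nra.
- assert (Rpower c e < Rpower x e) by (apply Rlt_Rpower_l; lra). nra.
Qed.

(* With c = lambda_s, the
   function x^(s-2) (x - c) (x^(r-s) - c^(r-s)) is positive off x = c, and
   its tent integral is M_{r-1} - c M_{r-2}, because M_{s-1} = c M_{s-2}. *)
Lemma lambda_strict_increasing a b s r : 0 < a < b -> s < r ->
  lambda s a b < lambda r a b.
Proof.
intros Hab Hsr.
rewrite !lambda_moment_ratio by exact Hab.
pose proof (moment_pos a b Hab (s - 2)) as Ps. pose proof (moment_pos a b Hab (r - 2)) as Pr.
set (c := moment a b (s - 1) / moment a b (s - 2)).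
assert (Hc : 0 < c) by (apply Rdiv_lt_0_compat; auto using moment_pos).
set (k := Rpower c (r - s)).
set (P := fun p x => Rpower x p).
set (D := fun x => Rpower x (s - 2) * ((x - c) * (Rpower x (r - s) - k))).
assert (HD : tent a b D = moment a b (r - 1) - c * moment a b (r - 2)
                          - k * (moment a b (s - 1) - c * moment a b (s - 2))).
{ rewrite (tent_ext a b ltac:(lra) D (fun x => 1 * (1 * P (r - 1) x + (- c) * P (r - 2) x)
                                    + (- k) * (1 * P (s - 1) x + (- c) * P (s - 2) x))).
  - unfold moment; rewrite !tent_lin; try lra; try (intros x Hx; unfold P; solve_continuity).
    unfold P; cbv beta; ring.
  - intros x Hx. unfold D, P.
    replace (r - 1) with ((s - 2) + (r - s) + 1) by ring.
    replace (r - 2) with ((s - 2) + (r - s)) by ring.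
    replace (s - 1) with ((s - 2) + 1) by ring.
    rewrite !Rpower_plus, Rpower_1 by lra. ring. }
assert (Hc0 : moment a b (s - 1) - c * moment a b (s - 2) = 0) by (unfold c; field; lra).
assert (HDpos : 0 < tent a b D).
{ apply (tent_gt0 a b ltac:(lra) D c).
  - intros x Hx; unfold D, k; solve_continuity.
  - intros x Hx. unfold D, k. apply Rmult_le_pos; [left; apply Rpower_pos|].
    destruct (Req_dec x c) as [->|Hxc]; [lra|].
    left; apply Rpower_sub_mul_pos; lra.
  - intros x Hx Hxc. unfold D, k. apply Rmult_lt_0_compat; [apply Rpower_pos|].
    apply Rpower_sub_mul_pos; lra. }
rewrite HD, Hc0, Rmult_0_r, Rminus_0_r in HDpos.
apply (Rmult_lt_reg_r (moment a b (r - 2))); [exact Pr|].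
replace (moment a b (r - 1) / moment a b (r - 2) * moment a b (r - 2))
  with (moment a b (r - 1)) by (field; lra).
lra.
Qed.

Lemma lambda_2 a b : 0 < a < b -> lambda 2 a b = AM a b.
Proof.
intros Hab. unfold lambda, AM.
destruct (Req_EM_T a b); [lra|].
destruct (Req_EM_T 2 (-1)); [lra|].
destruct (Req_EM_T 2 0); [lra|].
destruct (Req_EM_T 2 1); [lra|].
replace (2 + 1) with (INR 3) by (simpl; ring).
rewrite !Rpower_2, !Rpower_pow by lra. simpl.
field. intro E. assert (0 < (b - a) ^ 2) by nra. nra.
Qed.

(* In symmetric coordinates a = m(1 - t), b = m(1 + t), the Gini mean is
   m exp(phi t), where phi is the binary entropy-type function below. *)
Definition phi t := ((1 - t) * ln (1 - t) + (1 + t) * ln (1 + t)) / 2.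

Lemma Gini_symmetric m t : 0 < m -> 0 <= t < 1 ->
  Gini (m * (1 - t)) (m * (1 + t)) = m * exp (phi t).
Proof.
intros Hm Ht. unfold Gini, Rpower, phi.
rewrite !ln_mult by lra.
replace (m * (1 - t) + m * (1 + t)) with (2 * m) by ring.
rewrite <- exp_plus.
replace (m * exp _) with (exp (ln m + phi t)) by (rewrite exp_plus, exp_ln by exact Hm; reflexivity).
unfold phi. f_equal. field. lra.
Qed.

Lemma lambda_5_symmetric m t : 0 < m -> 0 < t < 1 ->
  lambda 5 (m * (1 - t)) (m * (1 + t)) = m * ((30 + 30 * t ^ 2 + 2 * t ^ 4) / (30 + 15 * t ^ 2)).
Proof.
intros Hm Ht. unfold lambda.
destruct (Req_EM_T (m * (1 - t)) (m * (1 + t))); [nra|].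
destruct (Req_EM_T 5 (-1)); [lra|].
destruct (Req_EM_T 5 0); [lra|].
destruct (Req_EM_T 5 1); [lra|].
replace (5 + 1) with (INR 6) by (simpl; ring). replace 5 with (INR 5) at 2 3 4 by (simpl; ring).
replace (m * (1 - t) + m * (1 + t)) with (2 * m) by ring.
rewrite !Rpower_pow by nra.
replace ((m * (1 - t)) ^ 6 + (m * (1 + t)) ^ 6 - 2 * (2 * m / 2) ^ 6)
  with (m ^ 6 * (t ^ 2 * (30 + 30 * t ^ 2 + 2 * t ^ 4))) by field.
replace ((m * (1 - t)) ^ 5 + (m * (1 + t)) ^ 5 - 2 * (2 * m / 2) ^ 5)
  with (m ^ 5 * (t ^ 2 * (20 + 10 * t ^ 2))) by field.
replace (INR 6) with 6 by (simpl; ring).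
assert (0 < t ^ 2) by nra. assert (0 < m ^ 5) by (apply pow_lt; lra).
field. repeat split; nra.
Qed.

(* The rational function t P(t^2) / Q(t^2) below is the derivative of
   ln((30 + 30 t^2 + 2 t^4) / (30 + 15 t^2)); it lies below the derivative
   artanh t = (ln(1+t) - ln(1-t)) / 2 of phi. *)
Definition pade_num u := 30 + 8 * u + 2 * u ^ 2.
Definition pade_den u := (15 + 15 * u + u ^ 2) * (2 + u).

Lemma artanh_ge_pade t : 0 <= t < 1 ->
  t * pade_num (t ^ 2) / pade_den (t ^ 2) <= (ln (1 + t) - ln (1 - t)) / 2.
Proof.
intros Ht.
(* dnum(y^2) / Q(y^2)^2 is the derivative of y P(y^2) / Q(y^2) *)
set (dnum := fun u => pade_num u * pade_den u + 2 * u * ((8 + 4 * u) * pade_den u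
                        - pade_num u * (45 + 34 * u + 3 * u ^ 2))).
set (G := fun y => (ln (1 + y) - ln (1 - y)) / 2 - y * pade_num (y ^ 2) / pade_den (y ^ 2)).
enough (G 0 <= G t) by (unfold G in *; rewrite Rplus_0_r, Rminus_0_r, ln_1 in *; lra).
apply (nondecreasing_of_derive G
         (fun y => 1 / (1 - y ^ 2) - dnum (y ^ 2) / pade_den (y ^ 2) ^ 2)); [lra| |].
- intros x Hx. unfold G, dnum, pade_num, pade_den. auto_derive.
  + repeat split; try lra; nra.
  + field. repeat split; try lra; nra.
- intros x Hx.
  assert (Hu : 0 <= x ^ 2 < 1) by nra.
  set (u := x ^ 2) in *.
  assert (HQ : 0 < pade_den u) by (unfold pade_den; nra).
  assert (E : pade_den u ^ 2 - (1 - u) * dnum u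
              = u * (4230 + 3285 * u + 736 * u ^ 2 + 353 * u ^ 3 + 46 * u ^ 4 - u ^ 5))
    by (unfold dnum, pade_den, pade_num; ring).
  assert (0 <= u * (4230 + 3285 * u + 736 * u ^ 2 + 353 * u ^ 3 + 46 * u ^ 4 - u ^ 5)).
  { apply Rmult_le_pos; [lra|].
    assert (u ^ 5 <= 1) by (rewrite <- (pow1 5); apply pow_incr; lra).
    assert (0 <= u ^ 2) by nra. assert (0 <= u ^ 3) by (apply pow_le; lra).
    assert (0 <= u ^ 4) by (apply pow_le; lra). lra. }
  replace (1 / (1 - u) - dnum u / pade_den u ^ 2)
    with ((pade_den u ^ 2 - (1 - u) * dnum u) / ((1 - u) * pade_den u ^ 2)) by (field; lra).
  apply Rdiv_le_0_compat; [lra|]. apply Rmult_lt_0_compat; [lra|nra].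
Qed.

(* Integrating the previous bound from 0 to t. *)
Lemma ln_pade_le_phi t : 0 <= t < 1 ->
  ln ((30 + 30 * t ^ 2 + 2 * t ^ 4) / (30 + 15 * t ^ 2)) <= phi t.
Proof.
intros Ht.
set (F := fun y => phi y - ln ((30 + 30 * y ^ 2 + 2 * y ^ 4) / (30 + 15 * y ^ 2))).
enough (F 0 <= F t) by (unfold F, phi in *;
  replace ((30 + 30 * 0 ^ 2 + 2 * 0 ^ 4) / (30 + 15 * 0 ^ 2)) with 1 in * by field;
  rewrite Rplus_0_r, Rminus_0_r, ln_1 in *; lra).
apply (nondecreasing_of_derive F
  (fun y => (ln (1 + y) - ln (1 - y)) / 2 - y * pade_num (y ^ 2) / pade_den (y ^ 2))); [lra| |].
- intros x Hx. unfold F, phi, pade_num, pade_den. auto_derive.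
  + repeat split; try lra; try nra. apply Rdiv_lt_0_compat; nra.
  + replace (1 + - x) with (1 - x) by ring. field. repeat split; try lra; nra.
- intros x Hx. pose proof (artanh_ge_pade x ltac:(lra)). lra.
Qed.

Lemma lambda_5_le_Gini a b : 0 < a < b -> lambda 5 a b <= Gini a b.
Proof.
intros Hab.
set (m := (a + b) / 2). set (t := (b - a) / (a + b)).
assert (Hm : 0 < m) by (unfold m; lra).
assert (Ht : 0 < t < 1).
{ unfold t; split; [apply Rdiv_lt_0_compat; lra|].
  apply (Rmult_lt_reg_r (a + b)); [lra|].
  unfold Rdiv; rewrite Rmult_assoc, Rinv_l; lra. }
replace a with (m * (1 - t)) by (unfold m, t; field; lra).
replace b with (m * (1 + t)) by (unfold m, t; field; lra).
rewrite lambda_5_symmetric, Gini_symmetric by lra.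
apply Rmult_le_compat_l; [lra|].
rewrite <- (exp_ln ((30 + 30 * t ^ 2 + 2 * t ^ 4) / (30 + 15 * t ^ 2)))
  by (apply Rdiv_lt_0_compat; nra).
apply exp_le_compat, ln_pade_le_phi; lra.
Qed.

Lemma Rpower_mvt q x : 0 < x ->
  exists xi, Rmin x 1 <= xi <= Rmax x 1 /\ 0 < xi /\
             Rpower x q - 1 = q * Rpower xi (q - 1) * (x - 1).
Proof.
intros Hx.
set (f := fun z => Rpower z q). set (df := fun y => q * Rpower y (q - 1)).
assert (Hd : forall y, 0 < y -> derivable_pt_lim f y (df y))
  by (intros y Hy; apply is_derive_Reals, is_derive_Rpower, Hy).
destruct (Rtotal_order x 1) as [Hlt|[->|Hgt]].
- destruct (MVT_cor2 f df x 1 Hlt) as [xi [E Hxi]]; [intros y Hy; apply Hd; lra|].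
  exists xi. rewrite Rmin_left, Rmax_right by lra. unfold f, df in E. rewrite Rpower_1_l in E.
  repeat split; lra.
- exists 1. rewrite Rmin_left, Rmax_left by lra. rewrite Rpower_1_l. repeat split; lra.
- destruct (MVT_cor2 f df 1 x Hgt) as [xi [E Hxi]]; [intros y Hy; apply Hd; lra|].
  exists xi. rewrite Rmin_right, Rmax_left by lra. unfold f, df in E. rewrite Rpower_1_l in E.
  repeat split; lra.
Qed.

Lemma Rpower_bernoulli z q : 0 < z -> 1 <= q -> 1 + q * (z - 1) <= Rpower z q.
Proof.
intros Hz Hq. destruct (Rpower_mvt q z Hz) as [xi [Hxi [Hxi0 E]]].
destruct (Rle_or_lt 1 z).
- rewrite Rmin_right, Rmax_left in Hxi by lra.
  pose proof (Rle_Rpower_l 1 xi (q - 1) ltac:(lra) ltac:(lra)) as Hpow.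
  rewrite Rpower_1_l in Hpow.
  assert (0 <= q * (z - 1)) by nra.
  assert (0 <= (Rpower xi (q - 1) - 1) * (q * (z - 1))) by (apply Rmult_le_pos; lra). nra.
- rewrite Rmin_left, Rmax_right in Hxi by lra.
  pose proof (Rle_Rpower_l xi 1 (q - 1) ltac:(lra) ltac:(lra)) as Hpow.
  rewrite Rpower_1_l in Hpow.
  assert (q * (z - 1) <= 0) by nra.
  assert (0 <= (1 - Rpower xi (q - 1)) * (- (q * (z - 1)))) by (apply Rmult_le_pos; lra). nra.
Qed.

(* On [1 - t, 1 + t], (x - 1)(x^q - 1) >= q (1 - t)^(q-1) (x - 1)^2: by the
   mean value theorem x^q - 1 = q xi^(q-1) (x - 1) with xi >= 1 - t. *)
Lemma Rpower_sub1_quadratic t q x : 0 < t < 1 -> 1 <= q -> 1 - t <= x <= 1 + t ->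
  q * Rpower (1 - t) (q - 1) * (x - 1) ^ 2 <= (x - 1) * (Rpower x q - 1).
Proof.
intros Ht Hq Hx. destruct (Rpower_mvt q x ltac:(lra)) as [xi [Hxi [Hxi0 E]]].
assert (1 - t <= xi) by (pose proof (Rmin_glb x 1 (1 - t)); lra).
assert (Rpower (1 - t) (q - 1) <= Rpower xi (q - 1)) by (apply Rle_Rpower_l; lra).
rewrite E.
assert (0 <= (Rpower xi (q - 1) - Rpower (1 - t) (q - 1)) * (q * (x - 1) ^ 2))
  by (apply Rmult_le_pos; [lra|]; apply Rmult_le_pos; [lra|apply pow2_ge_0]).
nra.
Qed.

Section CenteredTent.
Variables c h : R.
Hypothesis Hh : 0 < h.

Lemma tent_centered_1 : tent (c - h) (c + h) (fun _ => 1) = h ^ 2.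
Proof.
rewrite (tent_second_difference _ _ _ (fun x => x ^ 2 / 2) (fun x => x)); [field|lra| | |].
- intros; auto_derive; auto; field.
- intros; auto_derive; auto.
- intros; apply continuous_const.
Qed.

Lemma tent_centered_x : tent (c - h) (c + h) (fun x => x - c) = 0.
Proof.
rewrite (tent_second_difference _ _ _ (fun x => (x - c) ^ 3 / 6) (fun x => (x - c) ^ 2 / 2));
  [field|lra| | |].
- intros; auto_derive; auto; field.
- intros; auto_derive; auto; field.
- intros x Hx; solve_continuity.
Qed.

Lemma tent_centered_x2 : tent (c - h) (c + h) (fun x => (x - c) ^ 2) = h ^ 4 / 6.
Proof.
rewrite (tent_second_difference _ _ _ (fun x => (x - c) ^ 4 / 12) (fun x => (x - c) ^ 3 / 3));
  [field|lra| | |].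
- intros; auto_derive; auto; field.
- intros; auto_derive; auto; field.
- intros x Hx; solve_continuity.
Qed.

End CenteredTent.

(* Moment estimates on [1 - t, 1 + t] for small t, used to show that
   lambda_s(1 - t, 1 + t) = 1 + (s - 2) t^2 / 6 + ... grows faster than
   S(1 - t, 1 + t) = 1 + t^2 / 2 + ... when s > 5. *)
Section MomentsNearOne.
Variables q t : R.
Hypothesis Ht : 0 < t < 1.

(* M_{q+1} - M_q is the tent integral of (x - 1) x^q, which dominates
   (x - 1) + q (1 - t)^(q - 1) (x - 1)^2. *)
Lemma moment_gap_lower : 1 <= q ->
  q * Rpower (1 - t) (q - 1) * t ^ 4 / 6
    <= moment (1 - t) (1 + t) (q + 1) - moment (1 - t) (1 + t) q.
Proof.
intros Hq. set (kappa := q * Rpower (1 - t) (q - 1)).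
assert (Hge : 0 <= tent (1 - t) (1 + t)
   (fun x => 1 * (1 * Rpower x (q + 1) + (-1) * Rpower x q)
             + (-1) * (1 * (x - 1) + kappa * (x - 1) ^ 2))).
{ apply tent_ge0; [lra|intros x Hx; solve_continuity|].
  intros x Hx. rewrite Rpower_plus, Rpower_1 by lra.
  pose proof (Rpower_sub1_quadratic t q x Ht Hq Hx) as Hquad. fold kappa in Hquad. nra. }
rewrite !tent_lin in Hge; try lra; try (intros x Hx; solve_continuity).
rewrite tent_centered_x, tent_centered_x2 in Hge by lra.
unfold moment. lra.
Qed.

(* x^q <= (1 + t)^q on the interval, and the kernel has total mass t^2. *)
Lemma moment_upper : 0 <= q -> moment (1 - t) (1 + t) q <= Rpower (1 + t) q * t ^ 2.
Proof.
intros Hq.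
assert (Hge : 0 <= tent (1 - t) (1 + t) (fun x => Rpower (1 + t) q * 1 + (-1) * Rpower x q)).
{ apply tent_ge0; [lra|intros x Hx; solve_continuity|].
  intros x Hx. assert (Rpower x q <= Rpower (1 + t) q) by (apply Rle_Rpower_l; lra). lra. }
rewrite tent_lin in Hge; try lra; try (intros x Hx; solve_continuity).
rewrite tent_centered_1 in Hge by lra.
unfold moment. lra.
Qed.

Lemma lambda_lower_near_one : 1 <= q ->
  1 + q * Rpower (1 - t) (q - 1) * t ^ 2 / (6 * Rpower (1 + t) q)
    <= lambda (q + 2) (1 - t) (1 + t).
Proof.
intros Hq.
rewrite lambda_moment_ratio by lra.
replace (q + 2 - 1) with (q + 1) by ring. replace (q + 2 - 2) with q by ring.
pose proof (moment_gap_lower Hq) as Hgap. pose proof (moment_upper ltac:(lra)) as Hup.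
pose proof (moment_pos (1 - t) (1 + t) ltac:(lra) q) as Hpos.
pose proof (Rpower_pos (1 + t) q). pose proof (Rpower_pos (1 - t) (q - 1)).
set (M0 := moment (1 - t) (1 + t) q) in *. set (M1 := moment (1 - t) (1 + t) (q + 1)) in *.
set (R := Rpower (1 + t) q) in *. set (kappa := q * Rpower (1 - t) (q - 1)) in *.
assert (Hk : 0 < kappa) by (unfold kappa; apply Rmult_lt_0_compat; lra).
assert (Ht2 : 0 < t ^ 2) by (apply pow_lt; lra).
(* kappa t^2 / (6 R) <= (kappa t^4 / 6) / M0 <= (M1 - M0) / M0 *)
assert (kappa * t ^ 2 / (6 * R) <= (M1 - M0) / M0).
{ apply Rle_trans with (kappa * t ^ 4 / 6 / M0).
  - replace (kappa * t ^ 4 / 6 / M0) with (kappa * t ^ 2 / 6 * (t ^ 2 / M0)) by (field; lra).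
    replace (kappa * t ^ 2 / (6 * R)) with (kappa * t ^ 2 / 6 * / R) by (field; lra).
    apply Rmult_le_compat_l; [apply Rmult_le_pos; [nra|lra]|].
    apply (Rmult_le_reg_r (R * M0)); [nra|].
    replace (/ R * (R * M0)) with M0 by (field; lra).
    replace (t ^ 2 / M0 * (R * M0)) with (R * t ^ 2) by (field; lra). lra.
  - unfold Rdiv. apply Rmult_le_compat_r; [left; apply Rinv_0_lt_compat; lra|lra]. }
replace (M1 / M0) with (1 + (M1 - M0) / M0) by (field; lra). lra.
Qed.

End MomentsNearOne.

Lemma exp_le_inv_1_minus y : y < 1 -> exp y <= 1 / (1 - y).
Proof.
intros Hy. pose proof (exp_ineq1_le (- y)). pose proof (exp_pos y).
assert (exp y * exp (- y) = 1) by (rewrite <- exp_plus, Rplus_opp_r; apply exp_0).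
apply (Rmult_le_reg_r (1 - y)); [lra|].
replace (1 / (1 - y) * (1 - y)) with 1 by (field; lra). nra.
Qed.

Lemma ln_1_plus_le t : 0 < t -> ln (1 + t) <= t.
Proof.
intros Ht. rewrite <- (ln_exp t) at 2. apply ln_le; [lra|].
pose proof (exp_ineq1_le t). lra.
Qed.

Lemma Rpower_1_plus_upper q t : 0 <= q -> 0 < t -> q * t < 1 ->
  Rpower (1 + t) q <= 1 / (1 - q * t).
Proof.
intros Hq Ht Hqt. unfold Rpower.
apply Rle_trans with (exp (q * t)); [|apply exp_le_inv_1_minus, Hqt].
apply exp_le_compat, Rmult_le_compat_l; [exact Hq|apply ln_1_plus_le, Ht].
Qed.

(* Fourth-order bound on phi near 0: phi t = t^2/2 + t^4/12 + ... *)
Lemma phi_upper t : 0 <= t <= 1 / 2 -> phi t <= t ^ 2 / 2 + t ^ 4 / 9.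
Proof.
intros Ht.
(* phi' = artanh is bounded by y + 4 y^3 / 9 on [0, 1/2] *)
set (P1 := fun y => y + 4 * y ^ 3 / 9 - (ln (1 + y) - ln (1 - y)) / 2).
assert (HP1 : forall y, 0 <= y <= 1 / 2 -> 0 <= P1 y).
{ intros y Hy.
  enough (P1 0 <= P1 y) by (unfold P1 in *; rewrite Rplus_0_r, Rminus_0_r, ln_1 in *; lra).
  apply (nondecreasing_of_derive P1 (fun x => 1 + 4 * x ^ 2 / 3 - 1 / (1 - x ^ 2))); [lra| |].
  - intros x Hx. unfold P1. auto_derive; [repeat split; lra|].
    replace (1 + - x) with (1 - x) by ring. field. repeat split; nra.
  - intros x Hx. assert (0 <= x ^ 2 <= 1 / 4) by nra.
    replace (1 + 4 * x ^ 2 / 3 - 1 / (1 - x ^ 2))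
      with (x ^ 2 * (1 - 4 * x ^ 2) / (3 * (1 - x ^ 2))) by (field; lra).
    apply Rdiv_le_0_compat; [apply Rmult_le_pos; lra|lra]. }
set (P := fun y => y ^ 2 / 2 + y ^ 4 / 9 - phi y).
enough (P 0 <= P t) by (unfold P, phi in *; rewrite Rplus_0_r, Rminus_0_r, ln_1 in *; lra).
apply (nondecreasing_of_derive P P1); [lra| |intros x Hx; apply HP1; lra].
intros x Hx. unfold P, P1, phi. auto_derive; [repeat split; lra|].
replace (1 + - x) with (1 - x) by ring. field. repeat split; nra.
Qed.

Lemma Gini_near_one_upper t : 0 < t <= 1 / 2 ->
  Gini (1 - t) (1 + t) <= 1 / (1 - (t ^ 2 / 2 + t ^ 4 / 9)).
Proof.
intros Ht.
replace (Gini (1 - t) (1 + t)) with (Gini (1 * (1 - t)) (1 * (1 + t))) by (f_equal; ring).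
rewrite Gini_symmetric, Rmult_1_l by lra.
assert (Ht2 : t ^ 2 <= 1 / 4) by nra.
assert (t ^ 4 <= 1 / 16) by (replace (t ^ 4) with (t ^ 2 * t ^ 2) by ring; nra).
apply Rle_trans with (exp (t ^ 2 / 2 + t ^ 4 / 9)); [|apply exp_le_inv_1_minus; lra].
apply exp_le_compat, phi_upper; lra.
Qed.

(* For q > 3 some small t (namely t = (q - 3) / (10 q^2)) separates the
   second-order expansions 1 + q t^2 / 6 of lambda_{q+2} and 1 + t^2 / 2 of S,
   with room for the higher-order error terms. *)
Lemma separation_arithmetic q : 3 < q -> exists t, 0 < t /\ q * t <= 1 / 10 /\
  1 / (1 - (t ^ 2 / 2 + t ^ 4 / 9)) < 1 + q * (1 - 2 * q * t) * t ^ 2 / 6.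
Proof.
intros Hq. exists ((q - 3) / (10 * q ^ 2)).
set (t := (q - 3) / (10 * q ^ 2)).
assert (Hq2 : 9 < q ^ 2) by nra.
assert (Ht : 10 * q ^ 2 * t = q - 3) by (unfold t; field; lra).
assert (Ht0 : 0 < t).
{ apply (Rmult_lt_reg_l (10 * q ^ 2)); [lra|]. rewrite Rmult_0_r, Ht. lra. }
assert (Hqt : q * t <= 1 / 10).
{ apply (Rmult_le_reg_l (10 * q)); [lra|].
  replace (10 * q * (q * t)) with (10 * q ^ 2 * t) by ring. rewrite Ht. lra. }
assert (Hte : t <= (q - 3) / 90).
{ apply (Rmult_le_reg_l 90); [lra|]. replace (90 * ((q - 3) / 90)) with (10 * q ^ 2 * t) by (rewrite Ht; field).
  apply Rmult_le_compat_r; lra. }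
assert (Ht30 : t <= 1 / 30) by nra.
assert (Htt : t ^ 2 <= t / 30) by (replace (t ^ 2) with (t * t) by ring; nra).
assert (Ht2 : 0 < t ^ 2) by (apply pow_lt; lra).
set (phib := t ^ 2 / 2 + t ^ 4 / 9).
assert (Hphi : 0 < phib <= t ^ 2)
  by (unfold phib; replace (t ^ 4) with (t ^ 2 * t ^ 2) by ring; split; nra).
set (L := q * (1 - 2 * q * t) * t ^ 2 / 6).
assert (HL : L - phib = t ^ 2 * (2 * (q - 3) / 15 - t ^ 2 / 9)).
{ unfold L, phib. replace (q * (1 - 2 * q * t) * t ^ 2 / 6)
    with (q * t ^ 2 / 6 - (10 * q ^ 2 * t) * t ^ 2 / 30) by field.
  rewrite Ht. field. }
assert (HLup : 0 <= L <= q * t ^ 2 / 6) by (unfold L; split; nra).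
(* (1 + L)(1 - phib) - 1 = (L - phib) - L phib, and L phib <= t^2 (q t^2 / 6) *)
assert (Hgap : 0 < L - phib - L * phib).
{ assert (L * phib <= t ^ 2 * (q * t ^ 2 / 6)) by nra.
  assert (q * t ^ 2 <= t / 10) by (replace (q * t ^ 2) with ((q * t) * t) by ring; nra).
  assert (0 < 2 * (q - 3) / 15 - t ^ 2 / 9 - q * t ^ 2 / 6) by lra.
  assert (0 < t ^ 2 * (2 * (q - 3) / 15 - t ^ 2 / 9 - q * t ^ 2 / 6)) by (apply Rmult_lt_0_compat; lra).
  lra. }
split; [lra|split; [lra|]].
apply (Rmult_lt_reg_r (1 - phib)); [lra|].
replace (1 / (1 - phib) * (1 - phib)) with 1 by (field; lra).
replace ((1 + L) * (1 - phib)) with (1 + (L - phib - L * phib)) by ring. lra.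
Qed.

(* The first-order error terms: (1 - t)^(q-1) >= 1 - (q - 1) t by Bernoulli
   and (1 + t)^q <= 1 / (1 - q t), so q (1-t)^(q-1) / (1+t)^q >= q (1 - 2 q t). *)
Lemma power_ratio_lower q t : 2 <= q -> 0 < t -> q * t <= 1 / 10 ->
  q * (1 - 2 * q * t) * Rpower (1 + t) q <= q * Rpower (1 - t) (q - 1).
Proof.
intros Hq Ht Hqt.
set (R := Rpower (1 + t) q). set (K := Rpower (1 - t) (q - 1)).
assert (HR : 0 < R) by apply Rpower_pos.
assert (HK : 1 - (q - 1) * t <= K)
  by (pose proof (Rpower_bernoulli (1 - t) (q - 1) ltac:(nra) ltac:(lra)); unfold K; lra).
assert (HRinv : R * (1 - q * t) <= 1).
{ pose proof (Rpower_1_plus_upper q t ltac:(lra) Ht ltac:(lra)) as HRu. fold R in HRu.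
  apply (Rmult_le_compat_r (1 - q * t)) in HRu; [|lra].
  replace (1 / (1 - q * t) * (1 - q * t)) with 1 in HRu by (field; lra). exact HRu. }
assert (Hprod : q * (1 - 2 * q * t) <= q * (1 - (q - 1) * t) * (1 - q * t)).
{ assert (0 <= q * t + q ^ 2 * (q - 1) * t ^ 2)
    by (apply Rplus_le_le_0_compat; [nra|apply Rmult_le_pos; [nra|apply pow2_ge_0]]).
  replace (q * (1 - (q - 1) * t) * (1 - q * t))
    with (q * (1 - 2 * q * t) + (q * t + q ^ 2 * (q - 1) * t ^ 2)) by ring. lra. }
assert (HA : 0 <= q * (1 - (q - 1) * t)) by nra.
apply Rle_trans with (q * (1 - (q - 1) * t) * (R * (1 - q * t))); [nra|].
apply Rle_trans with (q * (1 - (q - 1) * t) * 1); [apply Rmult_le_compat_l; lra|nra].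
Qed.

Lemma lambda_exceeds_Gini s : 5 < s -> exists a b, 0 < a /\ 0 < b /\ Gini a b < lambda s a b.
Proof.
intros Hs. set (q := s - 2).
assert (Es : s = q + 2) by (unfold q; ring). assert (Hq : 3 < q) by (unfold q; lra).
clearbody q. subst s.
destruct (separation_arithmetic q Hq) as [t [Ht [Hqt Hsep]]].
assert (Ht30 : t < 1 / 30) by nra.
exists (1 - t), (1 + t). split; [lra|split; [lra|]].
pose proof (lambda_lower_near_one q t ltac:(lra) ltac:(lra)) as Hlam.
pose proof (Gini_near_one_upper t ltac:(lra)) as HGini.
pose proof (power_ratio_lower q t ltac:(lra) Ht Hqt) as Hratio.
set (R := Rpower (1 + t) q) in *. set (K := Rpower (1 - t) (q - 1)) in *.
assert (HR : 0 < R) by apply Rpower_pos.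
assert (Hcmp : q * (1 - 2 * q * t) * t ^ 2 / 6 <= q * K * t ^ 2 / (6 * R)).
{ apply (Rmult_le_reg_r (6 * R)); [lra|].
  replace (q * K * t ^ 2 / (6 * R) * (6 * R)) with (q * K * t ^ 2) by (field; lra).
  replace (q * (1 - 2 * q * t) * t ^ 2 / 6 * (6 * R)) with (q * (1 - 2 * q * t) * R * t ^ 2) by field.
  apply Rmult_le_compat_r; [apply pow2_ge_0|exact Hratio]. }
lra.
Qed.

Lemma lambda_sym s a b : lambda s a b = lambda s b a.
Proof.
unfold lambda.
destruct (Req_EM_T a b) as [E|N]; destruct (Req_EM_T b a) as [E'|N'];
  try (subst; reflexivity); try lra.
replace (b + a) with (a + b) by ring.
destruct (Req_EM_T s (-1)); [f_equal; ring|].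
destruct (Req_EM_T s 0); [f_equal; ring|].
destruct (Req_EM_T s 1); [f_equal; ring|].
f_equal; f_equal; ring.
Qed.

Lemma Gini_sym a b : Gini a b = Gini b a.
Proof. unfold Gini. replace (b + a) with (a + b) by ring. ring. Qed.

Lemma AM_sym a b : AM a b = AM b a.
Proof. unfold AM. field. Qed.

Lemma means_diagonal s a : 0 < a -> lambda s a a = a /\ AM a a = a /\ Gini a a = a.
Proof.
intros Ha. unfold lambda, AM, Gini. destruct (Req_EM_T a a) as [_|]; [|lra].
split; [reflexivity|split; [field|]].
rewrite <- Rpower_plus. replace (a / (a + a) + a / (a + a)) with 1 by (field; lra).
apply Rpower_1, Ha.
Qed.

Lemma symmetric_reduction (P : R -> R -> Prop) :
  (forall a b, P a b -> P b a) -> (forall a, 0 < a -> P a a) ->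
  (forall a b, 0 < a < b -> P a b) -> forall a b, 0 < a -> 0 < b -> P a b.
Proof.
intros Hsym Hdiag Hlt a b Ha Hb. destruct (Rtotal_order a b) as [L|[E|G]].
- apply Hlt; lra.
- subst; apply Hdiag, Ha.
- apply Hsym, Hlt; lra.
Qed.

Lemma AM_le_lambda s : 2 <= s -> forall a b, 0 < a -> 0 < b -> AM a b <= lambda s a b.
Proof.
intros Hs. apply symmetric_reduction.
- intros a b. rewrite AM_sym, lambda_sym; auto.
- intros a Ha. destruct (means_diagonal s a Ha) as [-> [-> _]]. lra.
- intros a b Hab. rewrite <- lambda_2 by exact Hab.
  destruct (Req_dec s 2) as [->|Hne]; [lra|].
  left; apply lambda_strict_increasing; lra.
Qed.

Lemma lambda_le_Gini s : s <= 5 -> forall a b, 0 < a -> 0 < b -> lambda s a b <= Gini a b.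
Proof.
intros Hs. apply symmetric_reduction.
- intros a b. rewrite Gini_sym, lambda_sym; auto.
- intros a Ha. destruct (means_diagonal s a Ha) as [-> [_ ->]]. lra.
- intros a b Hab. apply Rle_trans with (lambda 5 a b); [|apply lambda_5_le_Gini, Hab].
  destruct (Req_dec s 5) as [->|Hne]; [lra|].
  left; apply lambda_strict_increasing; lra.
Qed.

Theorem theorem3 :
  (forall s : R, 2 <= s <= 5 ->
     forall a b : R, 0 < a -> 0 < b ->
       AM a b <= lambda s a b /\ lambda s a b <= Gini a b) /\
  (forall s : R,
     (forall a b : R, 0 < a -> 0 < b -> AM a b <= lambda s a b) <-> 2 <= s) /\
  (forall s : R,
     (forall a b : R, 0 < a -> 0 < b -> lambda s a b <= Gini a b) <-> s <= 5).
Proof.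
split; [|split].
- intros s Hs a b Ha Hb.
  split; [apply AM_le_lambda|apply lambda_le_Gini]; auto; lra.
- intros s. split; [|apply AM_le_lambda].
  (* for s < 2, lambda_s(1, 2) < lambda_2(1, 2) = A(1, 2) *)
  intros Hlow. destruct (Rle_or_lt 2 s) as [|Hlt]; [assumption|exfalso].
  specialize (Hlow 1 2 ltac:(lra) ltac:(lra)).
  rewrite <- lambda_2 in Hlow by lra.
  pose proof (lambda_strict_increasing 1 2 s 2 ltac:(lra) Hlt). lra.
- intros s. split; [|apply lambda_le_Gini].
  intros Hup. destruct (Rle_or_lt s 5) as [|Hgt]; [assumption|exfalso].
  destruct (lambda_exceeds_Gini s Hgt) as [a [b [Ha [Hb Hab]]]].
  specialize (Hup a b Ha Hb). lra.
Qed.
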